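(* For every rational number $s>1$ we have $g(s)\le \frac{s+1}{2s}$. Moreover, there is no positive integer $t$ (with $st$ an integer) such that $g(s,t)=\frac{s+1}{2s}$.
   Context: Let $\mathbb{F}$ be a finite field and $x_1,\dots,x_p$ a basis of $\mathbb{F}^p$. A $[t\times m,p]$ array code is a $t\times m$ array whose entries (cells) are linear combinations of $x_1,\dots,x_p$; its columns are called servers. It has the $k$-PIR property (is a $[t\times m,p]$ $k$-PIR array code) if for every $i\in\{1,\dots,p\}$ there exist $k$ pairwise disjoint sets $S_1,\dots,S_k$ of columns such that for every $j$ the vector $x_i$ lies in the linear span of all entries of the columns in $S_j$. Its PIR rate is $k/m$. For a rational $s>1$ and a positive integer $t$ with $st$ an integer, $g(s,t)$ is the largest PIR rate $k/m$ of a $[t\times m,st]$ $k$-PIR array code (over all finite fields, all $m$ and all $k$), and $g(s)=\limsup_{t\to\infty} g(s,t)$, with $t$ ranging over positive integers such that $st$ is an integer. *)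

From HB Require Import structures.
From mathcomp Require Import all_boot all_order all_algebra.
From mathcomp Require Import all_classical all_reals.
From mathcomp Require Import topology normedtype sequences.
Set Implicit Arguments. Unset Strict Implicit. Unset Printing Implicit Defensive.
Import Order.TTheory GRing.Theory Num.Theory.
Local Open Scope ring_scope.

(* A [t x m, p] array code over F: cell (a, j) (row a, column/server j) is a
   linear combination of x_1..x_p, i.e. its coefficient vector in F^p.
   The basis vector x_i is the unit row vector delta_mx 0 i. *)
Definition array_code (F : finFieldType) (t m p : nat) :=
  'I_t -> 'I_m -> 'rV[F]_p.

Definition col_entries (F : finFieldType) (t m p : nat)
  (C : array_code F t m p) (S : {set 'I_m}) : seq 'rV[F]_p :=
  [seq C a j | a <- enum 'I_t, j <- enum S].

Definition is_kPIR (F : finFieldType) (t m p k : nat) (C : array_code F t m p) :=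
  forall i : 'I_p, exists S : 'I_k -> {set 'I_m},
    (forall j1 j2, j1 != j2 -> [disjoint S j1 & S j2]) /\
    (forall j, (delta_mx 0 i : 'rV[F]_p) \in <<col_entries C (S j)>>%VS).

Definition PIR_rates (R : realType) (s : rat) (t : nat) : set R :=
  [set r | exists (F : finFieldType) (p m k : nat) (C : array_code F t m p),
      [/\ p%:Q = s * t%:Q, (0 < m)%N, (0 < k)%N, @is_kPIR F t m p k C
        & r = k%:R / m%:R]].

Definition g (R : realType) (s : rat) (t : nat) : R := sup (@PIR_rates R s t).

(* g(s) = limsup over positive t with st integer; these t are exactly the
   positive multiples of the denominator of s, enumerated as denq s * (n+1). *)
Definition g_lim (R : realType) (s : rat) : \bar R :=
  limn_esup (fun n : nat => ((@g R s (`|denq s|%N * n.+1)%N)%:E)).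
Arguments g R s t : clear implicits.
Arguments g_lim R s : clear implicits.

From HB Require Import structures.
From mathcomp Require Import all_boot all_order all_algebra.
From mathcomp Require Import all_classical all_reals.
From mathcomp Require Import topology normedtype sequences.
From mathcomp Require Import zify lra.
Set Implicit Arguments. Unset Strict Implicit. Unset Printing Implicit Defensive.
Import Order.TTheory GRing.Theory Num.Theory.
Local Open Scope ring_scope.

(** Let p = st and call a server deficient when the unit vectors x_i lying in
    the span of its own column are fewer than t.  A recovery set for x_i either
    contains a server whose column already spans x_i, or it has at least two
    servers, one of which is deficient: if all its servers are non-deficient,
    each column span is spanned by t unit vectors, so the span of the set is
    spanned by unit vectors and contains x_i only if one of the columns does.
    Weighting a server by 2p-1 when it spans x_i and by p-1 (+1 if deficient)
    otherwise, every recovery set weighs at least 2p-1, while the total weight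
    of a server over all i is at most p(p+t-1).  Double counting gives
    k(2p-1) <= m(p+t-1), i.e. k/m <= (st+t-1)/(2st-1) < (s+1)/(2s). *)

Lemma leq_sum_disjoint (I T : finType) (S : I -> {set T}) (f : T -> nat) :
  (forall i j, i != j -> [disjoint S i & S j]) ->
  (\sum_i \sum_(x in S i) f x <= \sum_x f x)%N.
Proof.
move=> disjS; rewrite -partition_disjoint_bigcup //.
by rewrite [leqRHS](bigID [in \bigcup_i S i]) leq_addr.
Qed.

Lemma limn_esup_le (R : realType) (u : (\bar R)^nat) (l : \bar R) :
  (forall n, u n <= l)%E -> (limn_esup u <= l)%E.
Proof.
move=> u_le; rewrite /limn_esup limf_esupE.
apply: (@le_trans _ _ (ereal.ereal_sup (range u))).
  by apply: ereal.ereal_inf_lbound; exists setT => //; apply: filterT.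
by apply: ereal.ge_ereal_sup => _ [n _ <-]; apply: u_le.
Qed.

Section BasisRows.
Variables (F : fieldType) (p : nat).

Definition basis_row (i : 'I_p) : 'rV[F]_p := delta_mx 0 i.
Definition basis_rows (J : {set 'I_p}) := [seq basis_row i | i <- enum J].

Lemma basis_rows_free J : free (basis_rows J).
Proof.
apply/freeP => c sum_c0 l.
have nthE (j : 'I_#|J|) :
    (map_tuple basis_row (enum_tuple J))`_j = basis_row (enum_val j).
  have j_lt : (j < size (enum J))%N by rewrite -cardE.
  by rewrite /= (nth_map (enum_val j)) //; congr basis_row; apply: set_nth_default.
have := congr1 (fun v : 'rV[F]_p => v 0 (enum_val l)) sum_c0.
rewrite /= summxE (bigD1 l) //= big1 ?addr0; first by rewrite !mxE nthE !mxE !eqxx mulr1.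
move=> j /negbTE jl; rewrite !mxE nthE !mxE.
by rewrite (inj_eq enum_val_inj) eq_sym jl mulr0.
Qed.

Lemma dim_span_basis_rows J : \dim <<basis_rows J>> = #|J|.
Proof. by rewrite (eqP (basis_rows_free J)) size_map cardE. Qed.

Lemma mem_span_basis_rows J i : (basis_row i \in <<basis_rows J>>%VS) = (i \in J).
Proof.
apply/idP/idP => [|iJ]; last by apply: memv_span; apply: map_f; rewrite mem_enum.
apply: contraLR => iNJ; apply/negP => /(coord_span (X := in_tuple (basis_rows J))).
move/matrixP/(_ 0 i); rewrite summxE !mxE !eqxx big1 => [/eqP|l _].
  by rewrite oner_eq0.
have /mapP[j jJ ->] : (basis_rows J)`_l \in basis_rows J by apply: mem_nth.
rewrite !mxE; case: (i =P j) => [ij|]; last by rewrite mulr0.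
by move: jJ iNJ; rewrite mem_enum ij => ->.
Qed.

End BasisRows.
Arguments basis_row {F p} i.
Arguments basis_rows {F p} J.

Section ArrayCode.
Variables (F : finFieldType) (t m p : nat) (C : array_code F t m p).

Definition server_span (a : 'I_m) := <<col_entries C [set a]>>%VS.
Definition stored (a : 'I_m) := [set i | basis_row i \in server_span a].
Definition deficient := [set a | #|stored a| < t]%N.

Lemma col_entriesP (S : {set 'I_m}) y :
  reflect (exists2 a, a \in S & exists r, y = C r a) (y \in col_entries C S).
Proof.
apply: (iffP allpairsP) => [[[r a] /= [_ aS ->]]|[a aS [r ->]]].
  by exists a; [rewrite -mem_enum | exists r].
by exists (r, a); rewrite /= !mem_enum.
Qed.

Lemma mem_server_span r a : C r a \in server_span a.
Proof. by apply: memv_span; apply/col_entriesP; exists a; [rewrite set11 | exists r]. Qed.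

Lemma dim_server_span a : (\dim (server_span a) <= t)%N.
Proof.
apply: leq_trans (dim_span _) _.
by rewrite size_allpairs size_enum_ord -cardE cards1 muln1.
Qed.

Lemma span_stored_sub a : (<<basis_rows (stored a)>> <= server_span a)%VS.
Proof. by apply/span_subvP => v /mapP[i]; rewrite mem_enum inE => ia ->. Qed.

Lemma card_stored a : (#|stored a| <= t)%N.
Proof.
rewrite -(dim_span_basis_rows F).
exact: leq_trans (dimvS (span_stored_sub a)) (dim_server_span a).
Qed.

Lemma server_spanE a :
  #|stored a| = t -> server_span a = <<basis_rows (stored a)>>%VS.
Proof.
move=> full; apply/esym/eqP.
by rewrite eqEdim span_stored_sub dim_span_basis_rows full dim_server_span.
Qed.

Lemma full_servers_recover (T : {set 'I_m}) i :
    {in T, forall a, #|stored a| = t} ->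
  basis_row i \in <<col_entries C T>>%VS -> exists2 a, a \in T & i \in stored a.
Proof.
move=> Tfull iT.
suff /subvP/(_ _ iT) : (<<col_entries C T>> <= <<basis_rows (\bigcup_(a in T) stored a)>>)%VS.
  by rewrite mem_span_basis_rows => /bigcupP.
apply/span_subvP => v /col_entriesP[a aT [r ->]].
have := mem_server_span r a; rewrite (server_spanE (Tfull a aT)); apply: subvP.
apply/span_subvP => w /mapP[j]; rewrite mem_enum => ja ->.
by rewrite mem_span_basis_rows; apply/bigcupP; exists a.
Qed.

Definition recovery_weight (i : 'I_p) (a : 'I_m) : nat :=
  if i \in stored a then (2 * p - 1)%N else (p - 1 + (a \in deficient))%N.

Lemma recovery_set_weight (S : {set 'I_m}) i :
  basis_row i \in <<col_entries C S>>%VS ->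
  (2 * p - 1 <= \sum_(a in S) recovery_weight i a)%N.
Proof.
move=> iS.
have [/exists_inP[a aS ia]|/exists_inPn noS] := boolP [exists a in S, i \in stored a].
  by rewrite (bigD1 a aS) /= /recovery_weight ia leq_addr.
have [a aS a_def] : exists2 a, a \in S & a \in deficient.
  apply/exists_inP; apply: contraT => /exists_inPn all_full.
  have [b bS ib] : exists2 b, b \in S & i \in stored b.
    apply: full_servers_recover iS => b bS; apply/eqP.
    by have := all_full b bS; rewrite inE -leqNgt eqn_leq card_stored => ->.
  by have := noS b bS; rewrite ib.
have [b bS ba] : exists2 b, b \in S & b != a.
  apply/exists_inP; apply: contraT => /exists_inPn only_a.
  suff Sa : S = [set a] by have := noS a aS; rewrite inE /server_span -Sa iS.
  apply/setP => b; rewrite inE; apply/idP/eqP => [bS|-> //].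
  by apply/eqP; have := only_a b bS; rewrite negbK.
rewrite (bigD1 a aS) (bigD1 b) /=; last exact/andP.
rewrite /recovery_weight (negbTE (noS a aS)) (negbTE (noS b bS)) a_def.
lia.
Qed.

Lemma kPIR_recovery_weight k i (S : 'I_k -> {set 'I_m}) :
    (forall j1 j2, j1 != j2 -> [disjoint S j1 & S j2]) ->
    (forall j, basis_row i \in <<col_entries C (S j)>>%VS) ->
  (k * (2 * p - 1) <= \sum_a recovery_weight i a)%N.
Proof.
move=> disjS recS; apply: leq_trans (leq_sum_disjoint _ disjS).
rewrite -[k in (k * _)%N]card_ord -sum_nat_const.
by apply: leq_sum => j _; apply: recovery_set_weight.
Qed.

Lemma server_recovery_weight a :
  (\sum_i recovery_weight i a <= p * (p + t - 1))%N.
Proof.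
rewrite (bigID [in stored a]) /=.
rewrite [X in (X + _)%N](eq_bigr (fun=> 2 * p - 1)%N) => [|i ia]; last first.
  by rewrite /recovery_weight ia.
rewrite [X in (_ + X)%N](eq_bigr (fun=> p - 1 + (a \in deficient))%N) => [|i ia]; last first.
  by rewrite /recovery_weight (negbTE ia).
rewrite [X in (_ + X)%N](eq_bigl [in ~: stored a]) => [|i]; last by rewrite finset.in_setC.
rewrite !sum_nat_const.
have := cardsC (stored a); rewrite card_ord.
have := card_stored a; rewrite inE.
move: #|stored a| #|~: stored a| => c c' c_le_t <-.
by case: ltnP => /= [c_lt_t|t_le_c]; nia.
Qed.

Theorem kPIR_rate_le k :
  is_kPIR k C -> (k * (2 * p - 1) <= m * (p + t - 1))%N.
Proof.
move=> kPIR; have [->|p_gt0] := posnP p; first by rewrite muln0 sub0n muln0.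
rewrite -(leq_pmul2l p_gt0).
apply: (@leq_trans (\sum_i \sum_a recovery_weight i a)).
  rewrite -[p in (p * _)%N]card_ord -sum_nat_const; apply: leq_sum => i _.
  by have [S [disjS recS]] := kPIR i; apply: kPIR_recovery_weight disjS recS.
rewrite exchange_big /= mulnCA -[m in (m * _)%N]card_ord -sum_nat_const.
by apply: leq_sum => a _; apply: server_recovery_weight.
Qed.

End ArrayCode.

Definition pir_rate_bound (s : rat) (t : nat) : rat :=
  (s * t%:Q + t%:Q - 1) / (2 * s * t%:Q - 1).

Lemma pir_rate_bound_lt s t :
  1 < s -> (0 < t)%N -> pir_rate_bound s t < (s + 1) / (2 * s).
Proof.
move=> s_gt1 t_gt0; have t_ge1 : 1 <= t%:Q by rewrite ler1n.
have st_ge_s : s <= s * t%:Q by rewrite ler_peMr // ltW // (lt_trans ltr01).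
have den_gt0 : 0 < 2 * s * t%:Q - 1 by lra.
rewrite /pir_rate_bound ltr_pdivrMr; last lra.
by rewrite mulrAC ltr_pdivlMr //; lra.
Qed.

Lemma PIR_rates_le (R : realType) s t r : 0 < s -> (0 < t)%N ->
  @PIR_rates R s t r -> r <= ratr (pir_rate_bound s t).
Proof.
move=> s_gt0 t_gt0 [F [p [m [k [C [p_st m_gt0 _ kPIR ->]]]]]].
rewrite -!pmulrn in p_st.
have p_gt0 : (0 < p)%N by rewrite -(ltr0n rat) p_st mulr_gt0 // ltr0n.
have := kPIR_rate_le kPIR.
rewrite -(ler_nat rat) !natrM !natrB ?natrD ?p_st => [rate_le||]; [|lia..].
have -> : k%:R / m%:R = ratr (k%:R / m%:R) :> R by rewrite fmorph_div /= !ratr_nat.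
have st_ge1 : 1 <= s * t%:R by rewrite -p_st ler1n.
rewrite ler_rat /pir_rate_bound -!pmulrn ler_pdivrMr ?ltr0n //.
by rewrite mulrAC ler_pdivlMr; lra.
Qed.

Lemma g_lt (R : realType) s t :
  1 < s -> (0 < t)%N -> g R s t < ratr ((s + 1) / (2 * s)).
Proof.
move=> s_gt1 t_gt0; have s_gt0 : 0 < s by apply: lt_trans s_gt1.
rewrite /g; have [->|/set0P rates_neq0] := eqVneq (@PIR_rates R s t) set0.
  by rewrite sup0 ltr0q divr_gt0 ?addr_gt0 ?mulr_gt0.
apply: (@le_lt_trans _ _ (ratr (pir_rate_bound s t))).
  by apply: ge_sup rates_neq0 _ => r; apply: PIR_rates_le.
by rewrite ltr_rat pir_rate_bound_lt.
Qed.

Theorem theorem3 (R : realType) (s : rat) (hs : 1 < s) :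
  (g_lim R s <= (ratr ((s + 1) / (2 * s)) : R)%:E)%E /\
  (forall t : nat, (0 < t)%N -> (exists n : nat, s * t%:Q = n%:Q) ->
     g R s t != ratr ((s + 1) / (2 * s))).
Proof.
split=> [|t t_gt0 _]; last by rewrite lt_eqF // g_lt.
apply: limn_esup_le => n; rewrite lee_fin ltW // g_lt //.
by rewrite muln_gt0 absz_gt0 denq_neq0.
Qed.
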